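(* Let $A\in\mathbb{R}^{m\times n}$ be semimonotone ($A^{\dagger}\geq 0$) and let $(U_k,V_k,E_k)_{k=1}^{p}$ be a proper weak regular multisplitting of $A$. Let $H=\sum_{k=1}^{p}E_kU_k^{\dagger}V_k$ and let $A=B-C$ be the splitting induced by $H$, where $B=A(I-H)^{-1}$ and $C=B-A$. If $A\geq 0$ and $R(E_k)\subseteq R(A^{T})$ for each $k=1,\ldots,p$, then $A=B-C$ is a proper regular splitting.
   Context: $A^{\dagger}$ denotes the Moore–Penrose inverse, $R(\cdot)$, $N(\cdot)$ range and null space; inequalities are entrywise. A splitting $A=U-V$ is proper if $R(U)=R(A)$ and $N(U)=N(A)$; a proper splitting is proper weak regular if $U^{\dagger}\geq 0$ and $U^{\dagger}V\geq 0$, and proper regular if $U^{\dagger}\geq 0$ and $V\geq 0$. A proper weak regular multisplitting of $A$ is a triplet $(U_k,V_k,E_k)_{k=1}^{p}$ where each $A=U_k-V_k$ is a proper weak regular splitting and each $E_k\geq 0$ is an $n\times n$ diagonal matrix with $\sum_{k=1}^{p}E_k=I_n$. Under these hypotheses $I-H$ is invertible and $B^{\dagger}C=H$. *)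

From HB Require Import structures.
From mathcomp Require Import all_boot all_order all_algebra.
From Stdlib Require Import ClassicalEpsilon.
Set Implicit Arguments. Unset Strict Implicit. Unset Printing Implicit Defensive.
Import Order.TTheory GRing.Theory Num.Theory.
Local Open Scope ring_scope.

Definition is_mp_inverse (R : realFieldType) (m n : nat)
  (A : 'M[R]_(m, n)) (X : 'M[R]_(n, m)) : Prop :=
  [/\ A *m X *m A = A, X *m A *m X = X,
      (A *m X)^T = A *m X & (X *m A)^T = X *m A].

(* The Moore-Penrose inverse A^dagger (exists and is unique over an ordered field). *)
Definition mpinv (R : realFieldType) (m n : nat) (A : 'M[R]_(m, n)) : 'M[R]_(n, m) :=
  epsilon (inhabits 0) (is_mp_inverse A).

Definition nonneg_mx (R : realFieldType) (m n : nat) (M : 'M[R]_(m, n)) : Prop :=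
  forall i j, 0 <= M i j.

Definition range_mx (R : realFieldType) (m n : nat) (M : 'M[R]_(m, n))
  (y : 'cV[R]_m) : Prop := exists x : 'cV[R]_n, y = M *m x.

Definition null_mx (R : realFieldType) (m n : nat) (M : 'M[R]_(m, n))
  (x : 'cV[R]_n) : Prop := M *m x = 0.

Definition proper_splitting (R : realFieldType) (m n : nat)
  (A U V : 'M[R]_(m, n)) : Prop :=
  [/\ A = U - V,
      (forall y, range_mx U y <-> range_mx A y) &
      (forall x, null_mx U x <-> null_mx A x)].

Definition proper_weak_regular_splitting (R : realFieldType) (m n : nat)
  (A U V : 'M[R]_(m, n)) : Prop :=
  [/\ proper_splitting A U V, nonneg_mx (mpinv U) & nonneg_mx (mpinv U *m V)].

Definition proper_regular_splitting (R : realFieldType) (m n : nat)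
  (A U V : 'M[R]_(m, n)) : Prop :=
  [/\ proper_splitting A U V, nonneg_mx (mpinv U) & nonneg_mx V].

Definition proper_weak_regular_multisplitting (R : realFieldType) (m n p : nat)
  (A : 'M[R]_(m, n)) (U V : 'I_p -> 'M[R]_(m, n)) (E : 'I_p -> 'M[R]_n) : Prop :=
  [/\ (forall k, proper_weak_regular_splitting A (U k) (V k)),
      (forall k, is_diag_mx (E k)),
      (forall k, nonneg_mx (E k)) &
      \sum_(k < p) E k = 1%:M].

Definition mult_iter_mx (R : realFieldType) (m n p : nat)
  (U V : 'I_p -> 'M[R]_(m, n)) (E : 'I_p -> 'M[R]_n) : 'M[R]_n :=
  \sum_(k < p) E k *m mpinv (U k) *m V k.

From HB Require Import structures.
From mathcomp Require Import all_boot all_order all_algebra.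
From Stdlib Require Import ClassicalEpsilon.
Set Implicit Arguments. Unset Strict Implicit. Unset Printing Implicit Defensive.
Import Order.TTheory GRing.Theory Num.Theory.
Local Open Scope ring_scope.

(* Since the [E k] sum to the identity and have ranges inside [R(A^T)], [A] has
   full column rank, hence so has every [U k], and [U k^+ U k = I].  Then
   [I - H = G A] with [G = \sum_k E k U k^+ >= 0].  The positive vector
   [z = A^+ 1] satisfies [(I - H) z = G A A^+ 1 = G 1 > 0] while [H >= 0], so
   [I - H] is monotone in Collatz's sense: invertible with a nonnegative
   inverse.  Therefore [B = A (G A)^-1] has the range and null space of [A],
   two Penrose equations identify [B^+ = G >= 0], and [C = B - A = B H >= 0]. *)

Section MoorePenrose.
Variable R : realFieldType.

Definition null_trivial m n (A : 'M[R]_(m, n)) := forall x, null_mx A x -> x = 0.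

Lemma trmx_mulmx_self_eq0 n (x : 'cV[R]_n) : x^T *m x = 0 -> x = 0.
Proof.
move=> /matrixP /(_ 0 0); rewrite !mxE => sq0.
have sq_ge0 (l : 'I_n) : true -> 0 <= x^T 0 l * x l 0.
  by move=> _; rewrite mxE -expr2 sqr_ge0.
apply/matrixP => i j; rewrite (ord1 j) mxE.
have /eqP := psumr_eq0P sq_ge0 sq0 (i := i) erefl.
by rewrite mxE mulf_eq0 orbb => /eqP.
Qed.

Lemma null_trivial_unitmx n (S : 'M[R]_n) : null_trivial S -> S \in unitmx.
Proof.
move=> S0; rewrite unitmxE unitfE -det_tr; apply/negP => /det0P [v v_neq0 vS0].
have : v^T = 0 by apply: S0; rewrite /null_mx -[S]trmxK -trmx_mul vS0 trmx0.
by move/(congr1 trmx); rewrite trmxK trmx0 => v0; rewrite v0 eqxx in v_neq0.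
Qed.

Lemma null_trivial_gram m n (A : 'M[R]_(m, n)) :
  null_trivial A -> A^T *m A \in unitmx.
Proof.
move=> A0; apply: null_trivial_unitmx => x; rewrite /null_mx => AtAx0.
apply: A0; apply: trmx_mulmx_self_eq0.
by rewrite trmx_mul -mulmxA (mulmxA A^T) AtAx0 mulmx0.
Qed.

Lemma null_trivial_range_trmx m n (A : 'M[R]_(m, n)) :
  (forall y, range_mx A^T y) -> null_trivial A.
Proof.
move=> rangeT x; rewrite /null_mx => Ax0; have [y xE] := rangeT x.
by apply: trmx_mulmx_self_eq0; rewrite {1}xE trmx_mul trmxK -mulmxA Ax0 mulmx0.
Qed.

Lemma range_mx_sum m n p (A : 'M[R]_(m, n)) (y : 'I_p -> 'cV[R]_m) :
  (forall k, range_mx A (y k)) -> range_mx A (\sum_(k < p) y k).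
Proof.
move=> y_range; apply: big_ind => [|_ _ [x1 ->] [x2 ->]|k _]; last exact: y_range.
- by exists 0; rewrite mulmx0.
- by exists (x1 + x2); rewrite mulmxDr.
Qed.

Lemma gram_mp_inverse m n (A : 'M[R]_(m, n)) :
  null_trivial A -> is_mp_inverse A (invmx (A^T *m A) *m A^T).
Proof.
move=> A0; have XA1 : invmx (A^T *m A) *m A^T *m A = 1%:M.
  by rewrite -mulmxA mulVmx ?null_trivial_gram.
split; first by rewrite -mulmxA XA1 mulmx1.
- by rewrite XA1 mul1mx.
- by rewrite !trmx_mul trmxK trmx_inv trmx_mul trmxK mulmxA.
- by rewrite XA1 trmx1.
Qed.

Lemma mp_inverse_uniq m n (A : 'M[R]_(m, n)) (X : 'M[R]_(n, m)) :
  null_trivial A -> A *m X *m A = A -> (A *m X)^T = A *m X ->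
  X = invmx (A^T *m A) *m A^T.
Proof.
move=> A0 AXA AXsym.
have AtAX : A^T *m A *m X = A^T by rewrite -mulmxA -AXsym -trmx_mul AXA.
by rewrite -{1}(mulKmx (null_trivial_gram A0) X) AtAX.
Qed.

Lemma mpinv_gram m n (A : 'M[R]_(m, n)) :
  null_trivial A -> mpinv A = invmx (A^T *m A) *m A^T.
Proof.
move=> A0; have [AXA _ AXsym _] := epsilon_spec (inhabits 0) (is_mp_inverse A)
  (ex_intro _ _ (gram_mp_inverse A0)).
exact: mp_inverse_uniq.
Qed.

Lemma mpinv_mp_inverse m n (A : 'M[R]_(m, n)) :
  null_trivial A -> is_mp_inverse A (mpinv A).
Proof. by move=> A0; rewrite mpinv_gram //; apply: gram_mp_inverse. Qed.

Lemma mulVmx_mpinv m n (A : 'M[R]_(m, n)) :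
  null_trivial A -> mpinv A *m A = 1%:M.
Proof. by move=> A0; rewrite mpinv_gram // -mulmxA mulVmx ?null_trivial_gram. Qed.

Lemma mpinv_uniq m n (A : 'M[R]_(m, n)) (X : 'M[R]_(n, m)) :
  null_trivial A -> A *m X *m A = A -> (A *m X)^T = A *m X -> mpinv A = X.
Proof.
by move=> A0 AXA AXsym; rewrite mpinv_gram // -(mp_inverse_uniq A0 AXA AXsym).
Qed.

Lemma mp_inverse_range_proj m n k (A : 'M[R]_(m, n)) (X : 'M[R]_(n, m))
    (W : 'M[R]_(m, k)) :
  A *m X *m A = A -> (forall y, range_mx W y -> range_mx A y) ->
  A *m X *m W = W.
Proof.
move=> AXA WA; apply/matrixP => i j.
have [x colWE] := WA (col j W) (ex_intro _ _ (colE j W)).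
have : A *m X *m col j W = col j W by rewrite colWE mulmxA AXA.
by move/matrixP/(_ i 0); rewrite !colE mulmxA -!colE !mxE.
Qed.

Lemma mp_inverse_range_absorb m n k (A : 'M[R]_(m, n)) (X : 'M[R]_(n, m))
    (W : 'M[R]_(m, k)) (Y : 'M[R]_(k, m)) :
  is_mp_inverse A X -> is_mp_inverse W Y ->
  (forall y, range_mx W y -> range_mx A y) -> Y *m A *m X = Y.
Proof.
move=> [AXA _ AXsym _] [_ YWY WYsym _] WA.
have WtAX : W^T *m (A *m X) = W^T.
  by rewrite -AXsym -trmx_mul mp_inverse_range_proj.
have YE : Y *m Y^T *m W^T = Y by rewrite -mulmxA -trmx_mul WYsym mulmxA YWY.
by rewrite -{1}YE -!mulmxA WtAX mulmxA YE.
Qed.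

End MoorePenrose.

Section NonnegativeMatrices.
Variable R : realFieldType.

Definition pos_mx m n (M : 'M[R]_(m, n)) := forall i j, 0 < M i j.

Definition monotone_mx n (M : 'M[R]_n) :=
  forall y : 'cV[R]_n, nonneg_mx (M *m y) -> nonneg_mx y.

Lemma nonneg_mulmx m n k (X : 'M[R]_(m, n)) (Y : 'M[R]_(n, k)) :
  nonneg_mx X -> nonneg_mx Y -> nonneg_mx (X *m Y).
Proof.
by move=> X_ge0 Y_ge0 i j; rewrite mxE sumr_ge0 // => l _; rewrite mulr_ge0.
Qed.

Lemma nonneg_summx m n p (F : 'I_p -> 'M[R]_(m, n)) :
  (forall k, nonneg_mx (F k)) -> nonneg_mx (\sum_(k < p) F k).
Proof. by move=> F_ge0 i j; rewrite summxE sumr_ge0 // => k _; apply: F_ge0. Qed.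

Lemma psumr_gt0 (I : finType) (F : I -> R) (j : I) :
  (forall i, 0 <= F i) -> 0 < F j -> 0 < \sum_i F i.
Proof.
move=> F_ge0 Fj_gt0; rewrite lt_def sumr_ge0 // andbT psumr_neq0 => [|i _].
  by apply/hasP; exists j; rewrite ?mem_index_enum.
exact: F_ge0.
Qed.

Lemma nonneg_left_inverse_pos m n (X : 'M[R]_(n, m)) (Y : 'M[R]_(m, n)) :
  nonneg_mx X -> X *m Y = 1%:M -> pos_mx (X *m (const_mx 1 : 'cV[R]_m)).
Proof.
move=> X_ge0 XY1 i j; rewrite mxE.
have [l Xil_neq0 | Xi0] := pickP (fun l => X i l != 0).
  apply: (psumr_gt0 (j := l)) => [l'|]; rewrite mxE mulr1 ?X_ge0 //.
  by rewrite lt_def Xil_neq0 X_ge0.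
have := congr1 (fun M : 'M_n => M i i) XY1; rewrite !mxE eqxx big1 => [|l _].
  by move/eqP; rewrite eq_sym oner_eq0.
by move/negbFE/eqP: (Xi0 l) ->; rewrite mul0r.
Qed.

Lemma nonneg_partition_pos n p (E : 'I_p -> 'M[R]_n) (v : 'I_p -> 'cV[R]_n) :
  (forall k, nonneg_mx (E k)) -> \sum_(k < p) E k = 1%:M ->
  (forall k, pos_mx (v k)) -> pos_mx (\sum_(k < p) E k *m v k).
Proof.
move=> E_ge0 E_sum1 v_gt0 i j; rewrite (ord1 j) summxE.
have [k /= Ekii_gt0] : exists k, true && (0 < E k i i).
  apply: psumr_neq0P => [k _|]; first exact: E_ge0.
  by rewrite -summxE E_sum1 mxE eqxx; apply/eqP; rewrite oner_eq0.
apply: (psumr_gt0 (j := k)) => [k'|].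
  by apply: nonneg_mulmx; [exact: E_ge0 | move=> a b; exact/ltW/v_gt0].
rewrite mxE; apply: (psumr_gt0 (j := i)) => [l|]; last by rewrite mulr_gt0 ?v_gt0.
by rewrite mulr_ge0 ?E_ge0 ?ltW ?v_gt0.
Qed.

Lemma monotone_null_trivial n (M : 'M[R]_n) : monotone_mx M -> null_trivial M.
Proof.
move=> M_mon y; rewrite /null_mx => My0.
have zero_ge0 : nonneg_mx (0 : 'cV[R]_n) by move=> i j; rewrite mxE.
have y_ge0 : nonneg_mx y by apply: M_mon; rewrite My0.
have Ny_ge0 : nonneg_mx (- y) by apply: M_mon; rewrite mulmxN My0 oppr0.
apply/matrixP => i j; apply/eqP; rewrite mxE eq_le y_ge0 andbT.
by have := Ny_ge0 i j; rewrite mxE oppr_ge0.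
Qed.

Lemma monotone_unitmx n (M : 'M[R]_n) : monotone_mx M -> M \in unitmx.
Proof. by move/monotone_null_trivial/null_trivial_unitmx. Qed.

Lemma monotone_invmx_nonneg n (M : 'M[R]_n) :
  monotone_mx M -> nonneg_mx (invmx M).
Proof.
move=> M_mon i j.
have col_ge0 : nonneg_mx (col j (invmx M)).
  apply: (M_mon _) => a b; rewrite colE mulmxA mulmxV ?monotone_unitmx //.
  by rewrite mul1mx !mxE ler0n.
by have := col_ge0 i 0; rewrite mxE.
Qed.

(* If some [y l < 0], let [t > 0] be the largest ratio [- y l / z l]; at a
   coordinate realizing it, [- y <= H (- y) <= t * H z < t * z = - y]. *)
Lemma sub1mx_monotone n (H : 'M[R]_n) (z : 'cV[R]_n) :
  nonneg_mx H -> pos_mx z -> pos_mx ((1%:M - H) *m z) -> monotone_mx (1%:M - H).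
Proof.
have subE (x : 'cV[R]_n) : (1%:M - H) *m x = x - H *m x by rewrite mulmxBl mul1mx.
move=> H_ge0 z_gt0 Mz_gt0 y; rewrite subE => y_sup i j.
rewrite (ord1 j) leNgt; apply/negP => yi_lt0.
pose f l := - y l 0 / z l 0.
have [i0 _ f_max] := Order.TotalTheory.arg_maxP f (erefl : xpredT i).
set t := f i0 in f_max.
have t_gt0 : 0 < t.
  by apply: lt_le_trans (f_max i erefl); rewrite divr_gt0 ?oppr_gt0.
have Ny_le l : - y l 0 <= t * z l 0.
  by rewrite -ler_pdivrMr ?z_gt0 //; exact: f_max.
have Nyi0E : - y i0 0 = t * z i0 0 by rewrite /t /f mulrVK // unitfE gt_eqF.
have : - y i0 0 <= t * (H *m z) i0 0.
  apply: le_trans (_ : - (H *m y) i0 0 <= _).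
    by have := y_sup i0 0; rewrite !mxE subr_ge0 lerN2.
  rewrite !mxE -sumrN mulr_sumr; apply: ler_sum => l _.
  by rewrite -mulrN mulrCA ler_wpM2l.
have := Mz_gt0 i0 0; rewrite subE !mxE subr_gt0 => Hz_lt_z.
by rewrite Nyi0E ler_pM2l // leNgt Hz_lt_z.
Qed.

End NonnegativeMatrices.

Section InducedSplitting.
Variables (R : realFieldType) (m n : nat) (A : 'M[R]_(m, n)).
Hypothesis A0 : null_trivial A.

Lemma null_trivial_mulmx_invmx (M : 'M[R]_n) :
  M \in unitmx -> null_trivial (A *m invmx M).
Proof.
move=> M_unit x; rewrite /null_mx -mulmxA => /A0 Mix0.
by rewrite -(mulKVmx M_unit x) Mix0 mulmx0.
Qed.

Lemma proper_splitting_mulmx_invmx (M : 'M[R]_n) :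
  M \in unitmx -> proper_splitting A (A *m invmx M) (A *m invmx M - A).
Proof.
move=> M_unit; split=> [|y|x]; first by rewrite opprB addrC subrK.
  split=> [[x ->]|[x ->]]; first by exists (invmx M *m x); rewrite mulmxA.
  by exists (M *m x); rewrite -mulmxA mulKmx.
by rewrite /null_mx; split=> [/(null_trivial_mulmx_invmx M_unit)|/A0] ->;
  rewrite mulmx0.
Qed.

Lemma mulmx_invmx_sub1mx_subr (H : 'M[R]_n) : 1%:M - H \in unitmx ->
  A *m invmx (1%:M - H) - A = A *m invmx (1%:M - H) *m H.
Proof.
set M := 1%:M - H => M_unit.
have HE : H = 1%:M - M by rewrite /M opprB addrC subrK.
by rewrite [in RHS]HE mulmxBr mulmx1 -mulmxA mulVmx // mulmx1.
Qed.

Lemma mpinv_mulmx_invmx (G : 'M[R]_(n, m)) :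
  G *m A \in unitmx -> G *m A *m mpinv A = G ->
  mpinv (A *m invmx (G *m A)) = G.
Proof.
move=> GA_unit GAX.
have BG : A *m invmx (G *m A) *m G = A *m mpinv A.
  by rewrite -{2}GAX mulmxA -(mulmxA A) mulVmx // mulmx1.
have [AXA _ AXsym _] := mpinv_mp_inverse A0.
apply: mpinv_uniq; rewrite ?BG //; first exact: null_trivial_mulmx_invmx.
by rewrite mulmxA AXA.
Qed.

End InducedSplitting.

Section ProperWeakRegularMultisplitting.
Variables (R : realFieldType) (m n p : nat) (A : 'M[R]_(m, n)).
Variables (U V : 'I_p -> 'M[R]_(m, n)) (E : 'I_p -> 'M[R]_n).
Hypothesis A_semimonotone : nonneg_mx (mpinv A).
Hypothesis multisplitting : proper_weak_regular_multisplitting A U V E.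
Hypothesis E_range : forall k y, range_mx (E k) y -> range_mx A^T y.

Definition mult_mpinv := \sum_(k < p) E k *m mpinv (U k).

Lemma multisplitting_null_trivial : null_trivial A.
Proof.
have [_ _ _ E_sum1] := multisplitting.
apply: null_trivial_range_trmx => y; rewrite -[y]mul1mx -E_sum1 mulmx_suml.
by apply: range_mx_sum => k; apply: E_range; exists y.
Qed.

Lemma multisplitting_null_trivial_U k : null_trivial (U k).
Proof.
have [/(_ k) [[_ _ UA_null] _ _] _ _ _] := multisplitting.
by move=> x /UA_null; apply: multisplitting_null_trivial.
Qed.

Lemma sub1_mult_iter_mx : 1%:M - mult_iter_mx U V E = mult_mpinv *m A.
Proof.
have [splitting _ _ E_sum1] := multisplitting.
rewrite /mult_iter_mx /mult_mpinv mulmx_suml -{1}E_sum1 -sumrB.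
apply: eq_bigr => k _; have [[A_split _ _] _ _] := splitting k.
rewrite A_split mulmxBr -(mulmxA _ _ (U k)) mulVmx_mpinv ?mulmx1 //.
exact: multisplitting_null_trivial_U.
Qed.

Lemma mult_iter_mx_nonneg : nonneg_mx (mult_iter_mx U V E).
Proof.
have [splitting _ E_ge0 _] := multisplitting.
apply: nonneg_summx => k; rewrite -mulmxA; apply: nonneg_mulmx => //.
by have [_ _ UV_ge0] := splitting k.
Qed.

Lemma mult_mpinv_nonneg : nonneg_mx mult_mpinv.
Proof.
have [splitting _ E_ge0 _] := multisplitting.
apply: nonneg_summx => k; apply: nonneg_mulmx => //.
by have [_ U_ge0 _] := splitting k.
Qed.

Lemma mult_mpinv_proj : mult_mpinv *m A *m mpinv A = mult_mpinv.
Proof.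
have [splitting _ _ _] := multisplitting.
rewrite /mult_mpinv !mulmx_suml; apply: eq_bigr => k _.
have [[_ UA_range _] _ _] := splitting k.
rewrite -!mulmxA [mpinv (U k) *m _]mulmxA (mp_inverse_range_absorb
  (mpinv_mp_inverse multisplitting_null_trivial)
  (mpinv_mp_inverse (multisplitting_null_trivial_U (k := k)))) //.
by move=> y /UA_range.
Qed.

Lemma sub1_mult_iter_mx_monotone : monotone_mx (1%:M - mult_iter_mx U V E).
Proof.
have [splitting _ E_ge0 E_sum1] := multisplitting.
have A0 := multisplitting_null_trivial.
apply: (sub1mx_monotone (z := mpinv A *m const_mx 1)).
- exact: mult_iter_mx_nonneg.
- exact: nonneg_left_inverse_pos A_semimonotone (mulVmx_mpinv A0).
rewrite sub1_mult_iter_mx mulmxA mult_mpinv_proj /mult_mpinv mulmx_suml.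
under eq_bigr do rewrite -mulmxA.
apply: nonneg_partition_pos => // k; have [_ U_ge0 _] := splitting k.
have U0 := multisplitting_null_trivial_U (k := k).
exact: nonneg_left_inverse_pos U_ge0 (mulVmx_mpinv U0).
Qed.

End ProperWeakRegularMultisplitting.

Theorem theorem5p7 (R : realFieldType) (m n p : nat) (A : 'M[R]_(m, n))
  (U V : 'I_p -> 'M[R]_(m, n)) (E : 'I_p -> 'M[R]_n) :
  nonneg_mx (mpinv A) ->
  proper_weak_regular_multisplitting A U V E ->
  nonneg_mx A ->
  (forall k y, range_mx (E k) y -> range_mx A^T y) ->
  let H := mult_iter_mx U V E in
  let B := A *m invmx (1%:M - H) in
  let C := B - A in
  proper_regular_splitting A B C.
Proof.
move=> A_semimonotone multisplitting A_ge0 E_range H B C.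
have A0 := multisplitting_null_trivial multisplitting E_range.
have M_mon := sub1_mult_iter_mx_monotone A_semimonotone multisplitting E_range.
have M_unit := monotone_unitmx M_mon.
have GA := sub1_mult_iter_mx multisplitting E_range.
split.
- exact: proper_splitting_mulmx_invmx.
- rewrite /B /H GA mpinv_mulmx_invmx //.
  + exact: mult_mpinv_nonneg multisplitting.
  + by rewrite -GA.
  + exact: mult_mpinv_proj multisplitting E_range.
rewrite /C /B mulmx_invmx_sub1mx_subr //.
apply: nonneg_mulmx; last exact: mult_iter_mx_nonneg multisplitting.
by apply: nonneg_mulmx => //; apply: monotone_invmx_nonneg.
Qed.
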